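(* Let $S=\{(x_i,y_i)\}_{i=1}^n$ with $0\le x_1<x_2<\dots<x_n$, and let $\hat f_S$ be the minimum-norm interpolating two-layer ReLU network for $S$ (defined in the context). Then: (i) $\hat f_S(x)=g_1(x)$ for $x\in(-\infty,x_2)$; (ii) $\hat f_S(x)=g_{n-1}(x)$ for $x\in[x_{n-1},\infty)$; (iii) for each $i\in\{2,\dots,n-2\}$ and $x\in[x_i,x_{i+1})$: if $\mathsf{curv}(x_i)=\mathsf{curv}(x_{i+1})=+1$ then $\max\{g_{i-1}(x),g_{i+1}(x)\}\le\hat f_S(x)\le g_i(x)$; if $\mathsf{curv}(x_i)=\mathsf{curv}(x_{i+1})=-1$ then $\min\{g_{i-1}(x),g_{i+1}(x)\}\ge\hat f_S(x)\ge g_i(x)$; otherwise (i.e. $\mathsf{curv}(x_i)=0$, or $\mathsf{curv}(x_{i+1})=0$, or $\mathsf{curv}(x_i)\ne\mathsf{curv}(x_{i+1})$) $\hat f_S(x)=g_i(x)$.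
   Context: A two-layer ReLU network with skip connection is $f_{\theta,a_0,b_0}(x)=\sum_{j=1}^m a_j(w_jx+b_j)_++a_0x+b_0$ with $\theta=\{a_j,w_j,b_j\}_{j=1}^m\in\mathbb{R}^{3m}$ and arbitrary width $m$. The min-norm interpolator $\hat f_S$ is the (unique) minimizer of $\|\theta\|_2^2$ over all $m,\theta,a_0,b_0$ subject to $f_{\theta,a_0,b_0}(x_i)=y_i$ for all $i\in[n]$ (the weights $a_0,b_0$ are not penalized). For $i\in[n-1]$, $g_i$ is the affine function through $(x_i,y_i)$ and $(x_{i+1},y_{i+1})$, and $\delta_i$ is its slope; set $\delta_0:=\delta_1$, $\delta_n:=\delta_{n-1}$. For $i\in[n]$, $\mathsf{curv}(x_i)=+1$ if $\delta_i>\delta_{i-1}$, $0$ if $\delta_i=\delta_{i-1}$, and $-1$ if $\delta_i<\delta_{i-1}$. *)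

From Stdlib Require Import Reals Lra ZArith.
Open Scope R_scope.

Fixpoint fsum (m : nat) (F : nat -> R) : R :=
  match m with
  | O => 0
  | S k => fsum k F + F k
  end.

Definition relu (t : R) : R := Rmax 0 t.

Record net := mkNet {
  width : nat;
  na : nat -> R;
  nw : nat -> R;
  nb : nat -> R;
  na0 : R;
  nb0 : R }.

Definition net_eval (N : net) (t : R) : R :=
  fsum (width N) (fun j => na N j * relu (nw N j * t + nb N j)) + na0 N * t + nb0 N.

(* ||theta||_2^2 ; a0, b0 are not penalized *)
Definition net_cost (N : net) : R :=
  fsum (width N) (fun j => na N j ^ 2 + nw N j ^ 2 + nb N j ^ 2).

Definition interpolates (n : nat) (x y : nat -> R) (N : net) : Prop :=
  forall i, (1 <= i <= n)%nat -> net_eval N (x i) = y i.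

Definition min_norm_interp (n : nat) (x y : nat -> R) (N : net) : Prop :=
  interpolates n x y N /\
  forall N', interpolates n x y N' -> net_cost N <= net_cost N'.

Definition slope (x y : nat -> R) (i : nat) : R :=
  (y (S i) - y i) / (x (S i) - x i).

Definition gseg (x y : nat -> R) (i : nat) (t : R) : R :=
  y i + slope x y i * (t - x i).

(* delta_i with the conventions delta_0 := delta_1, delta_n := delta_{n-1} *)
Definition delta (n : nat) (x y : nat -> R) (i : nat) : R :=
  if Nat.eqb i 0 then slope x y 1
  else if Nat.eqb i n then slope x y (n - 1)
  else slope x y i.

Definition curv (n : nat) (x y : nat -> R) (i : nat) : Z :=
  if Rlt_dec (delta n x y (i - 1)) (delta n x y i) then 1%Z
  else if Rlt_dec (delta n x y i) (delta n x y (i - 1)) then (-1)%Z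
  else 0%Z.

(* A neuron a (w t + b)_+ is an affine function plus a kink of jump a |w| at -b/w, and by
   AM-GM its cost a^2 + w^2 + b^2 is at least 2 |a w| omega(-b/w), omega c = sqrt (1 + c^2),
   with equality for a suitable rescaling. So the min-norm interpolant is a kink model
   sum_j s_j (t - c_j)_+ + A + B t of least cost sum_j |s_j| omega(c_j) through the data.
   Such a model has no kinks left of x_2 or right of x_(n-1) (collapsing them onto x_2,
   resp. x_(n-1), is cheaper because 0 <= x_1), no jumps of opposite signs in one data
   interval (merging parts of them is cheaper: |s| omega c is the Euclidean norm of
   (s, s c)), and no jumps of opposite signs on the two sides of a data point (dilating
   them about it is cheaper). Hence the one-sided slopes at x_i lie between the adjacent
   chord slopes, and on each data interval the interpolant is convex or concave, which
   pins it between the chord g_i and the lines g_(i-1), g_(i+1). *)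

From Stdlib Require Import Reals ZArith Lra Psatz Lia Classical.
Open Scope R_scope.

Lemma fsum_ext m F G : (forall j, (j < m)%nat -> F j = G j) -> fsum m F = fsum m G.
Proof.
  induction m as [|m IH]; intros H; simpl; [reflexivity|].
  rewrite IH by (intros; apply H; lia). rewrite H by lia. reflexivity.
Qed.

Lemma fsum_plus m F G : fsum m (fun j => F j + G j) = fsum m F + fsum m G.
Proof. induction m as [|m IH]; simpl; [lra|]. rewrite IH. ring. Qed.

Lemma fsum_minus m F G : fsum m (fun j => F j - G j) = fsum m F - fsum m G.
Proof. induction m as [|m IH]; simpl; [lra|]. rewrite IH. ring. Qed.

Lemma fsum_scal m c F : fsum m (fun j => c * F j) = c * fsum m F.
Proof. induction m as [|m IH]; simpl; [lra|]. rewrite IH. ring. Qed.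

Lemma fsum_zero m : fsum m (fun _ => 0) = 0.
Proof. induction m as [|m IH]; simpl; [lra|]. rewrite IH. ring. Qed.

Lemma fsum_le m F G : (forall j, (j < m)%nat -> F j <= G j) -> fsum m F <= fsum m G.
Proof.
  induction m as [|m IH]; intros H; simpl; [lra|].
  pose proof (H m ltac:(lia)). pose proof (IH ltac:(intros; apply H; lia)). lra.
Qed.

Lemma fsum_lt m F G k : (forall j, (j < m)%nat -> F j <= G j) -> (k < m)%nat -> F k < G k ->
  fsum m F < fsum m G.
Proof.
  induction m as [|m IH]; intros H Hk Hlt; simpl; [lia|].
  destruct (Nat.eq_dec k m) as [->|Hne].
  - pose proof (fsum_le m F G ltac:(intros; apply H; lia)). lra.
  - pose proof (IH ltac:(intros; apply H; lia) ltac:(lia) Hlt). pose proof (H m ltac:(lia)). lra.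
Qed.

Lemma fsum_nonneg m F : (forall j, (j < m)%nat -> 0 <= F j) -> 0 <= fsum m F.
Proof. intros H. rewrite <- (fsum_zero m). now apply fsum_le. Qed.

Lemma fsum_nonpos m F : (forall j, (j < m)%nat -> F j <= 0) -> fsum m F <= 0.
Proof. intros H. rewrite <- (fsum_zero m). now apply fsum_le. Qed.

Lemma fsum_Rabs m F : Rabs (fsum m F) <= fsum m (fun j => Rabs (F j)).
Proof.
  induction m as [|m IH]; simpl; [rewrite Rabs_R0; lra|].
  eapply Rle_trans; [apply Rabs_triang|]. lra.
Qed.

Lemma fsum_single m k d : (k < m)%nat -> fsum m (fun j => if Nat.eqb j k then d else 0) = d.
Proof.
  induction m as [|m IH]; intros Hk; simpl; [lia|].
  destruct (Nat.eqb_spec m k) as [->|Hne].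
  - rewrite (fsum_ext _ _ (fun _ => 0)), fsum_zero; [ring|].
    intros j Hj. destruct (Nat.eqb_spec j k); [lia|reflexivity].
  - rewrite IH by lia. ring.
Qed.

Lemma relu_of_nonneg t : 0 <= t -> relu t = t.
Proof. intros. unfold relu. rewrite Rmax_right; lra. Qed.

Lemma relu_of_nonpos t : t <= 0 -> relu t = 0.
Proof. intros. unfold relu. rewrite Rmax_left; lra. Qed.

Lemma relu_ge0 t : 0 <= relu t.
Proof. apply Rmax_l. Qed.

Lemma relu_mul_pos r t : 0 < r -> relu (r * t) = r * relu t.
Proof.
  intros. destruct (Rle_dec 0 t).
  - rewrite !relu_of_nonneg; nra.
  - rewrite !relu_of_nonpos; nra.
Qed.

Lemma relu_plus_relu_opp t : relu t = t + relu (- t).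
Proof.
  destruct (Rle_dec 0 t).
  - rewrite relu_of_nonneg, relu_of_nonpos by lra. ring.
  - rewrite relu_of_nonpos, relu_of_nonneg by lra. ring.
Qed.

(** * Networks as kink models *)

Definition omega (c : R) : R := sqrt (1 + c ^ 2).

Lemma omega_pos c : 0 < omega c.
Proof. apply sqrt_lt_R0. nra. Qed.

Lemma omega_sqr c : omega c * omega c = 1 + c ^ 2.
Proof. apply sqrt_sqrt. nra. Qed.

Lemma omega_le a c : 0 <= a <= c -> omega a <= omega c.
Proof. intros. apply sqrt_le_1; nra. Qed.

Record kinks := mkKinks {
  kn : nat;
  kpos : nat -> R;
  kjump : nat -> R;
  kconst : R;
  klin : R }.

Definition keval (K : kinks) (t : R) : R :=
  fsum (kn K) (fun j => kjump K j * relu (t - kpos K j)) + kconst K + klin K * t.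

Definition kcost (K : kinks) : R :=
  fsum (kn K) (fun j => Rabs (kjump K j) * omega (kpos K j)).

Definition kinterp (n : nat) (x y : nat -> R) (K : kinks) : Prop :=
  forall i, (1 <= i <= n)%nat -> keval K (x i) = y i.

Definition kmin (n : nat) (x y : nat -> R) (K : kinks) : Prop :=
  kinterp n x y K /\ forall K', kinterp n x y K' -> kcost K <= kcost K'.

(* For [w = 0] the jump [a |w|] vanishes, so the position [0] is arbitrary. *)
Definition neuron_pos (N : net) (j : nat) : R :=
  if Req_EM_T (nw N j) 0 then 0 else - nb N j / nw N j.

Definition neuron_const (N : net) (j : nat) : R :=
  if Rlt_dec 0 (nw N j) then 0
  else if Rlt_dec (nw N j) 0 then na N j * nb N j
  else na N j * relu (nb N j).

Definition neuron_lin (N : net) (j : nat) : R :=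
  if Rlt_dec (nw N j) 0 then na N j * nw N j else 0.

Definition kinks_of_net (N : net) : kinks :=
  mkKinks (width N) (neuron_pos N) (fun j => na N j * Rabs (nw N j))
    (nb0 N + fsum (width N) (neuron_const N)) (na0 N + fsum (width N) (neuron_lin N)).

Lemma neuron_kink_form N j t :
  na N j * relu (nw N j * t + nb N j) =
  na N j * Rabs (nw N j) * relu (t - neuron_pos N j) + neuron_const N j + neuron_lin N j * t.
Proof.
  unfold neuron_pos, neuron_const, neuron_lin.
  set (a := na N j); set (w := nw N j); set (b := nb N j).
  destruct (Rlt_dec 0 w) as [Hw|Hw]; [|destruct (Rlt_dec w 0) as [Hw'|Hw']].
  - destruct (Req_EM_T w 0); [lra|]. destruct (Rlt_dec w 0); [lra|].
    rewrite Rabs_right by lra.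
    replace (w * t + b) with (w * (t - - b / w)) by (field; lra).
    rewrite relu_mul_pos by lra. ring.
  - destruct (Req_EM_T w 0); [lra|].
    rewrite Rabs_left by lra.
    replace (w * t + b) with (- w * - (t - - b / w)) by (field; lra).
    rewrite relu_mul_pos, (relu_plus_relu_opp (t - _)) by lra. field. lra.
  - assert (w = 0) as -> by lra. destruct (Req_EM_T 0 0); [|lra].
    rewrite Rabs_R0. replace (0 * t + b) with b by ring. ring.
Qed.

Lemma keval_kinks_of_net N t : keval (kinks_of_net N) t = net_eval N t.
Proof.
  unfold keval, net_eval, kinks_of_net; simpl.
  rewrite (fsum_ext _ (fun j => na N j * relu (nw N j * t + nb N j))
             (fun j => (na N j * Rabs (nw N j) * relu (t - neuron_pos N j) + t * neuron_lin N j)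
                       + neuron_const N j)).
  - rewrite !fsum_plus, fsum_scal. ring.
  - intros j _. rewrite neuron_kink_form. ring.
Qed.

(* AM-GM: with r := |w| omega(-b/w) one has r^2 = w^2 + b^2 and 2 |a| r <= a^2 + r^2. *)
Lemma neuron_cost_ge a w b :
  2 * (Rabs (a * Rabs w) * omega (if Req_EM_T w 0 then 0 else - b / w)) <= a ^ 2 + w ^ 2 + b ^ 2.
Proof.
  destruct (Req_EM_T w 0) as [->|Hw].
  - rewrite Rabs_R0, Rmult_0_r, Rabs_R0. nra.
  - set (c := - b / w).
    assert (Hb : b = - c * w) by (unfold c; field; exact Hw).
    set (r := Rabs w * omega c).
    assert (Hr : r * r = w ^ 2 + b ^ 2).
    { unfold r. rewrite Hb.
      replace (Rabs w * omega c * (Rabs w * omega c)) with (Rabs w * Rabs w * (omega c * omega c))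
        by ring.
      rewrite <- Rabs_mult, Rabs_right, omega_sqr by nra. ring. }
    assert (Ha : Rabs a * Rabs a = a ^ 2) by (rewrite <- Rabs_mult, Rabs_right by nra; ring).
    rewrite Rabs_mult, Rabs_Rabsolu.
    replace (Rabs a * Rabs w * omega c) with (Rabs a * r) by (unfold r; ring).
    pose proof (Rle_0_sqr (Rabs a - r)). unfold Rsqr in *. nra.
Qed.

Lemma kcost_kinks_of_net N : 2 * kcost (kinks_of_net N) <= net_cost N.
Proof.
  unfold kcost, net_cost, kinks_of_net; simpl.
  rewrite <- fsum_scal. apply fsum_le. intros j _. apply neuron_cost_ge.
Qed.

(* Each kink (c, s) with s <> 0 is realized by the neuron (s/r) (r t - r c)_+ with
   r^2 = |s| / omega c, which balances the two sides of the AM-GM inequality. *)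
Definition neuron_scale (K : kinks) (j : nat) : R :=
  sqrt (Rabs (kjump K j) / omega (kpos K j)).

Definition net_of_kinks (K : kinks) : net :=
  mkNet (kn K)
    (fun j => if Req_EM_T (kjump K j) 0 then 0 else kjump K j / neuron_scale K j)
    (fun j => if Req_EM_T (kjump K j) 0 then 0 else neuron_scale K j)
    (fun j => if Req_EM_T (kjump K j) 0 then 0 else - neuron_scale K j * kpos K j)
    (klin K) (kconst K).

Lemma neuron_scale_pos K j : kjump K j <> 0 -> 0 < neuron_scale K j.
Proof.
  intros. apply sqrt_lt_R0, Rdiv_lt_0_compat; [now apply Rabs_pos_lt | apply omega_pos].
Qed.

Lemma neuron_scale_sqr K j : neuron_scale K j * neuron_scale K j = Rabs (kjump K j) / omega (kpos K j).
Proof.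
  apply sqrt_sqrt, Rmult_le_pos; [apply Rabs_pos|].
  left. apply Rinv_0_lt_compat, omega_pos.
Qed.

Lemma net_eval_net_of_kinks K t : net_eval (net_of_kinks K) t = keval K t.
Proof.
  unfold net_eval, keval, net_of_kinks; simpl.
  rewrite (fsum_ext _ _ (fun j => kjump K j * relu (t - kpos K j))); [ring|].
  intros j _. destruct (Req_EM_T (kjump K j) 0) as [->|Hs]; [ring|].
  pose proof (neuron_scale_pos K j Hs).
  replace (neuron_scale K j * t + - neuron_scale K j * kpos K j)
    with (neuron_scale K j * (t - kpos K j)) by ring.
  rewrite relu_mul_pos by assumption. field. lra.
Qed.

Lemma net_cost_net_of_kinks K : net_cost (net_of_kinks K) = 2 * kcost K.
Proof.
  unfold net_cost, kcost, net_of_kinks; simpl.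
  rewrite <- fsum_scal. apply fsum_ext. intros j _.
  destruct (Req_EM_T (kjump K j) 0) as [->|Hs]; [rewrite Rabs_R0; ring|].
  pose proof (neuron_scale_pos K j Hs) as Hr. pose proof (neuron_scale_sqr K j) as Hr2.
  pose proof (omega_pos (kpos K j)). pose proof (omega_sqr (kpos K j)) as Ho.
  pose proof (Rabs_pos_lt _ Hs).
  set (r := neuron_scale K j) in *. set (s := kjump K j) in *.
  set (o := omega (kpos K j)) in *. set (c := kpos K j) in *.
  assert (Hs2 : s ^ 2 = Rabs s * Rabs s) by (rewrite <- Rabs_mult, Rabs_right by nra; ring).
  transitivity (s ^ 2 / (r * r) + r * r * (1 + c ^ 2)); [field; lra|].
  rewrite Hr2, <- Ho, Hs2. field. lra.
Qed.

Lemma kmin_kinks_of_net n x y N :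
  min_norm_interp n x y N -> kmin n x y (kinks_of_net N).
Proof.
  intros [Hi Hm]. split.
  - intros i Hi'. rewrite keval_kinks_of_net. now apply Hi.
  - intros K' HK'.
    assert (HN' : interpolates n x y (net_of_kinks K')).
    { intros i Hi'. rewrite net_eval_net_of_kinks. now apply HK'. }
    pose proof (Hm _ HN'). rewrite net_cost_net_of_kinks in *.
    pose proof (kcost_kinks_of_net N). lra.
Qed.

Definition kneg (K : kinks) : kinks :=
  mkKinks (kn K) (kpos K) (fun j => - kjump K j) (- kconst K) (- klin K).

Lemma keval_kneg K t : keval (kneg K) t = - keval K t.
Proof.
  unfold keval, kneg; simpl.
  rewrite (fsum_ext _ _ (fun j => -1 * (kjump K j * relu (t - kpos K j)))) by (intros; ring).
  rewrite fsum_scal. ring.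
Qed.

Lemma kcost_kneg K : kcost (kneg K) = kcost K.
Proof. apply fsum_ext. intros j _. simpl. now rewrite Rabs_Ropp. Qed.

Lemma kmin_kneg n x y K : kmin n x y K -> kmin n x (fun i => - y i) (kneg K).
Proof.
  intros [Hi Hm]. split.
  - intros i Hi'. now rewrite keval_kneg, Hi.
  - intros K' HK'. rewrite kcost_kneg, <- (kcost_kneg K'). apply Hm.
    intros i Hi'. rewrite keval_kneg, HK' by exact Hi'. ring.
Qed.

(** * Cheaper kink models *)

Definition kgraft (K : kinks) (s : nat -> R) (c1 s1 c2 s2 A B : R) : kinks :=
  mkKinks (S (S (kn K)))
    (fun j => if Nat.ltb j (kn K) then kpos K j else if Nat.eqb j (kn K) then c1 else c2)
    (fun j => if Nat.ltb j (kn K) then s j else if Nat.eqb j (kn K) then s1 else s2) A B.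

Lemma fsum_kgraft K s c1 s1 c2 s2 A B (g : R -> R -> R) :
  fsum (kn (kgraft K s c1 s1 c2 s2 A B))
    (fun j => g (kjump (kgraft K s c1 s1 c2 s2 A B) j) (kpos (kgraft K s c1 s1 c2 s2 A B) j)) =
  fsum (kn K) (fun j => g (s j) (kpos K j)) + g s1 c1 + g s2 c2.
Proof.
  unfold kgraft; cbn [fsum kn kpos kjump]. rewrite Nat.ltb_irrefl, Nat.eqb_refl.
  replace (Nat.ltb (S (kn K)) (kn K)) with false by (symmetry; apply Nat.ltb_ge; lia).
  replace (Nat.eqb (S (kn K)) (kn K)) with false by (symmetry; apply Nat.eqb_neq; lia).
  rewrite (fsum_ext (kn K) _ (fun j => g (s j) (kpos K j))); [reflexivity|].
  intros j Hj. now replace (Nat.ltb j (kn K)) with true by (symmetry; apply Nat.ltb_lt; lia).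
Qed.

Lemma keval_kgraft K s c1 s1 c2 s2 A B t :
  keval (kgraft K s c1 s1 c2 s2 A B) t =
  fsum (kn K) (fun j => s j * relu (t - kpos K j))
  + s1 * relu (t - c1) + s2 * relu (t - c2) + A + B * t.
Proof. unfold keval. now rewrite (fsum_kgraft _ _ _ _ _ _ _ _ (fun s c => s * relu (t - c))). Qed.

Lemma kcost_kgraft K s c1 s1 c2 s2 A B :
  kcost (kgraft K s c1 s1 c2 s2 A B) =
  fsum (kn K) (fun j => Rabs (s j) * omega (kpos K j)) + Rabs s1 * omega c1 + Rabs s2 * omega c2.
Proof. unfold kcost. now rewrite (fsum_kgraft _ _ _ _ _ _ _ _ (fun s c => Rabs s * omega c)). Qed.

(* At [t = a] and for [t >= b], a jump [s] at [c < b] agrees with an affine function plus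
   the jump [s (c - a)_+ / (b - a)] at [b], which is cheaper by this inequality. *)
Lemma kink_moved_right_cheaper a b c : 0 <= a -> a < b -> c < b ->
  relu (c - a) * omega b < (b - a) * omega c.
Proof.
  intros. pose proof (omega_pos b). pose proof (omega_pos c).
  destruct (Rle_dec c a).
  - rewrite relu_of_nonpos by lra. nra.
  - rewrite relu_of_nonneg by lra.
    apply Rsqr_incrst_0; unfold Rsqr; [|nra|nra].
    replace ((c - a) * omega b * ((c - a) * omega b)) with ((c - a) * (c - a) * (omega b * omega b))
      by ring.
    replace ((b - a) * omega c * ((b - a) * omega c)) with ((b - a) * (b - a) * (omega c * omega c))
      by ring.
    rewrite !omega_sqr.
    assert (0 <= a * (b - c)) by nra.
    assert (0 < (b - a) * c + (c - a) * b) by nra.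
    nra.
Qed.

Lemma kink_moved_left_cheaper a b c : 0 <= a -> a < b -> a < c ->
  relu (b - c) * omega a < (b - a) * omega c.
Proof.
  intros. pose proof (omega_pos a). pose proof (omega_le a c ltac:(lra)).
  destruct (Rle_dec b c).
  - rewrite relu_of_nonpos by lra. nra.
  - rewrite relu_of_nonneg by lra. nra.
Qed.

Lemma omega_dilate_lt p l q : 0 <= p -> 1 < l -> 0 <= p + l * (q - p) ->
  omega (p + l * (q - p)) < l * omega q.
Proof.
  intros Hp Hl Hd. set (d := p + l * (q - p)) in *.
  assert (Hq : l * q = d + (l - 1) * p) by (unfold d; ring).
  clearbody d. pose proof (omega_pos d). pose proof (omega_pos q).
  apply Rsqr_incrst_0; unfold Rsqr; [|lra|nra].
  replace (l * omega q * (l * omega q)) with (l * l * (omega q * omega q)) by ring.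
  rewrite !omega_sqr.
  replace (l * l * (1 + q ^ 2)) with (l * l + (l * q) * (l * q)) by ring.
  rewrite Hq.
  assert (0 <= (l - 1) * d * p) by (apply Rmult_le_pos; [apply Rmult_le_pos|]; lra).
  assert (0 <= (l - 1) * (l - 1) * p * p) by (repeat apply Rmult_le_pos; lra).
  nra.
Qed.

(* |s| omega c is the Euclidean norm of (s, s c); two jumps of opposite signs are
   never parallel as vectors, so the triangle inequality is strict. *)
Lemma merged_kink_cheaper A B c1 c2 c : A * B < 0 -> (A + B) * c = A * c1 + B * c2 ->
  Rabs (A + B) * omega c < Rabs A * omega c1 + Rabs B * omega c2.
Proof.
  intros HAB Hc.
  pose proof (omega_pos c1) as O1. pose proof (omega_pos c2) as O2. pose proof (omega_pos c).
  pose proof (omega_sqr c1) as E1. pose proof (omega_sqr c2) as E2. pose proof (omega_sqr c) as E.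
  assert (Hsq : forall u, Rabs u * Rabs u = u * u)
    by (intros u; rewrite <- Rabs_mult; apply Rabs_right, Rle_ge, Rle_0_sqr).
  assert (HABa : Rabs A * Rabs B = - (A * B)) by (rewrite <- Rabs_mult; apply Rabs_left; lra).
  assert (Hkey : 0 < omega c1 * omega c2 + 1 + c1 * c2).
  { assert (Hp : (omega c1 * omega c2) * (omega c1 * omega c2)
                 = (1 + c1 * c2) * (1 + c1 * c2) + (c1 - c2) * (c1 - c2)).
    { replace ((omega c1 * omega c2) * (omega c1 * omega c2))
        with ((omega c1 * omega c1) * (omega c2 * omega c2)) by ring.
      rewrite E1, E2. ring. }
    destruct (Rlt_dec 0 (1 + c1 * c2)); [nra|].
    assert (c1 <> c2) by (intros ->; nra).
    assert (0 < (c1 - c2) * (c1 - c2)) by (apply Rsqr_pos_lt; lra).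
    assert (0 < omega c1 * omega c2) by (apply Rmult_lt_0_compat; lra).
    nra. }
  pose proof (Rabs_pos A). pose proof (Rabs_pos B). pose proof (Rabs_pos (A + B)).
  apply Rsqr_incrst_0; unfold Rsqr; [|nra|nra].
  replace (Rabs (A + B) * omega c * (Rabs (A + B) * omega c))
    with ((A + B) * (A + B) + ((A + B) * c) * ((A + B) * c))
    by (replace (Rabs (A + B) * omega c * (Rabs (A + B) * omega c))
          with (Rabs (A + B) * Rabs (A + B) * (omega c * omega c)) by ring;
        rewrite Hsq, E; ring).
  rewrite Hc.
  replace ((Rabs A * omega c1 + Rabs B * omega c2) * (Rabs A * omega c1 + Rabs B * omega c2))
    with (Rabs A * Rabs A * (omega c1 * omega c1) + Rabs B * Rabs B * (omega c2 * omega c2)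
          + 2 * (Rabs A * Rabs B) * (omega c1 * omega c2)) by ring.
  rewrite !Hsq, HABa, E1, E2.
  assert (0 < - (A * B) * (omega c1 * omega c2 + 1 + c1 * c2)) by (apply Rmult_lt_0_compat; lra).
  nra.
Qed.

Lemma keval_kgraft_drop K (P : nat -> Prop) (dec : forall j, {P j} + {~ P j}) c1 s1 c2 s2 A B t :
  keval (kgraft K (fun j => if dec j then 0 else kjump K j) c1 s1 c2 s2 A B) t =
  keval K t - fsum (kn K) (fun j => if dec j then kjump K j * relu (t - kpos K j) else 0)
  + s1 * relu (t - c1) + s2 * relu (t - c2) + (A - kconst K) + (B - klin K) * t.
Proof.
  rewrite keval_kgraft. unfold keval.
  rewrite (fsum_ext _ _ (fun j => kjump K j * relu (t - kpos K j)
                                  - (if dec j then kjump K j * relu (t - kpos K j) else 0)))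
    by (intros j _; destruct (dec j); ring).
  rewrite fsum_minus. ring.
Qed.

(* The left side is the cost once the jumps [s_j] at the kinks satisfying [P] are
   replaced by the single jump [(sum_j s_j r_j) / d] at [p]. *)
Lemma collapse_cost_lt K (P : nat -> Prop) (dec : forall j, {P j} + {~ P j}) (r : nat -> R) p d k :
  0 < d ->
  (forall j, (j < kn K)%nat -> P j -> 0 <= r j /\ r j * omega p < d * omega (kpos K j)) ->
  (k < kn K)%nat -> P k -> kjump K k <> 0 ->
  fsum (kn K) (fun j => Rabs (if dec j then 0 else kjump K j) * omega (kpos K j))
  + Rabs (fsum (kn K) (fun j => if dec j then kjump K j * r j else 0) / d) * omega p < kcost K.
Proof.
  intros Hd Hr Hk HPk Hs. pose proof (omega_pos p).
  assert (Hw : Rabs (fsum (kn K) (fun j => if dec j then kjump K j * r j else 0) / d) * omega p <=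
               fsum (kn K) (fun j => if dec j then Rabs (kjump K j) * (r j * omega p / d) else 0)).
  { assert (Hid : 0 < / d) by (apply Rinv_0_lt_compat, Hd).
    transitivity (omega p * / d * fsum (kn K) (fun j => Rabs (if dec j then kjump K j * r j else 0))).
    - unfold Rdiv. rewrite Rabs_mult, (Rabs_right (/ d)) by lra.
      rewrite (Rmult_comm (Rabs _) (/ d)), Rmult_comm, <- Rmult_assoc.
      apply Rmult_le_compat_l; [nra | apply fsum_Rabs].
    - rewrite <- fsum_scal. apply Req_le, fsum_ext. intros j Hj.
      destruct (dec j) as [Hj'|]; [|rewrite Rabs_R0; ring].
      destruct (Hr j Hj Hj'). rewrite Rabs_mult, (Rabs_right (r j)) by lra. field. lra. }
  enough (fsum (kn K) (fun j => Rabs (if dec j then 0 else kjump K j) * omega (kpos K j)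
                        + (if dec j then Rabs (kjump K j) * (r j * omega p / d) else 0)) < kcost K)
    by (rewrite fsum_plus in *; lra).
  apply (fsum_lt _ _ _ k); [| exact Hk |].
  - intros j Hj. destruct (dec j) as [Hj'|]; [|lra].
    destruct (Hr j Hj Hj'). pose proof (Rabs_pos (kjump K j)).
    rewrite Rabs_R0, Rmult_0_l, Rplus_0_l.
    apply Rmult_le_compat_l; [lra|].
    apply (Rmult_le_reg_r d); [exact Hd|]. unfold Rdiv. rewrite Rmult_assoc, Rinv_l; lra.
  - destruct (dec k) as [_|]; [|contradiction].
    destruct (Hr k Hk HPk). pose proof (Rabs_pos_lt _ Hs).
    rewrite Rabs_R0, Rmult_0_l, Rplus_0_l.
    apply Rmult_lt_compat_l; [lra|].
    apply (Rmult_lt_reg_r d); [exact Hd|]. unfold Rdiv. rewrite Rmult_assoc, Rinv_l; lra.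
Qed.

Lemma Rabs_minus_same_sign s u : 0 <= s * u -> Rabs u <= Rabs s -> Rabs (s - u) = Rabs s - Rabs u.
Proof.
  intros H1 H2.
  destruct (Rcase_abs s), (Rcase_abs u);
    repeat first [ rewrite (Rabs_left s) in * by lra | rewrite (Rabs_right s) in * by lra
                 | rewrite (Rabs_left u) in * by lra | rewrite (Rabs_right u) in * by lra ].
  all: first [ rewrite Rabs_left1 by nra; nra | rewrite Rabs_right by nra; nra ].
Qed.

Definition kmove (K : kinks) (k1 : nat) (A : R) (k2 : nat) (B : R) (c1 s1 c2 s2 : R) : kinks :=
  kgraft K (fun j => kjump K j - (if Nat.eqb j k1 then A else 0) - (if Nat.eqb j k2 then B else 0))
    c1 s1 c2 s2 (kconst K) (klin K).

Lemma keval_kmove K k1 A k2 B c1 s1 c2 s2 t : (k1 < kn K)%nat -> (k2 < kn K)%nat ->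
  keval (kmove K k1 A k2 B c1 s1 c2 s2) t =
  keval K t - A * relu (t - kpos K k1) - B * relu (t - kpos K k2)
  + s1 * relu (t - c1) + s2 * relu (t - c2).
Proof.
  intros H1 H2. unfold kmove. rewrite keval_kgraft. unfold keval.
  rewrite <- (fsum_single (kn K) k1 (A * relu (t - kpos K k1))) by exact H1.
  rewrite <- (fsum_single (kn K) k2 (B * relu (t - kpos K k2))) by exact H2.
  rewrite (fsum_ext _ _ (fun j => kjump K j * relu (t - kpos K j)
                                  - (if Nat.eqb j k1 then A * relu (t - kpos K k1) else 0)
                                  - (if Nat.eqb j k2 then B * relu (t - kpos K k2) else 0))).
  - rewrite !fsum_minus. ring.
  - intros j _. destruct (Nat.eqb_spec j k1), (Nat.eqb_spec j k2); subst; ring.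
Qed.

Lemma kcost_kmove K k1 A k2 B c1 s1 c2 s2 : (k1 < kn K)%nat -> (k2 < kn K)%nat -> k1 <> k2 ->
  0 <= kjump K k1 * A -> Rabs A <= Rabs (kjump K k1) ->
  0 <= kjump K k2 * B -> Rabs B <= Rabs (kjump K k2) ->
  kcost (kmove K k1 A k2 B c1 s1 c2 s2) =
  kcost K - Rabs A * omega (kpos K k1) - Rabs B * omega (kpos K k2)
  + Rabs s1 * omega c1 + Rabs s2 * omega c2.
Proof.
  intros H1 H2 Hne HA1 HA2 HB1 HB2. unfold kmove. rewrite kcost_kgraft. unfold kcost.
  rewrite <- (fsum_single (kn K) k1 (Rabs A * omega (kpos K k1))) by exact H1.
  rewrite <- (fsum_single (kn K) k2 (Rabs B * omega (kpos K k2))) by exact H2.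
  rewrite (fsum_ext _ _ (fun j => Rabs (kjump K j) * omega (kpos K j)
                                  - (if Nat.eqb j k1 then Rabs A * omega (kpos K k1) else 0)
                                  - (if Nat.eqb j k2 then Rabs B * omega (kpos K k2) else 0))).
  - rewrite !fsum_minus. ring.
  - intros j _. destruct (Nat.eqb_spec j k1), (Nat.eqb_spec j k2); subst; try lia.
    + rewrite Rminus_0_r, Rabs_minus_same_sign by assumption. ring.
    + rewrite Rminus_0_r, Rabs_minus_same_sign by assumption. ring.
    + rewrite !Rminus_0_r. ring.
Qed.

Lemma common_part s1 s2 : s1 * s2 < 0 ->
  exists A, 0 < s1 * A /\ s2 * A < 0 /\ Rabs A <= Rabs s1 /\ Rabs A <= Rabs s2.
Proof.
  intros H. assert (s1 <> 0) by (intros ->; nra). assert (s2 <> 0) by (intros ->; nra).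
  set (m := Rmin (Rabs s1) (Rabs s2)).
  assert (Hm : 0 < m) by (apply Rmin_pos; now apply Rabs_pos_lt).
  pose proof (Rmin_l (Rabs s1) (Rabs s2)) as Hm1. pose proof (Rmin_r (Rabs s1) (Rabs s2)) as Hm2.
  fold m in Hm1, Hm2. clearbody m.
  destruct (Rcase_abs s1).
  - assert (0 < s2) by nra. exists (- m). rewrite Rabs_Ropp, Rabs_right by lra. repeat split; nra.
  - assert (s2 < 0) by nra. exists m. rewrite Rabs_right by lra. repeat split; nra.
Qed.

Lemma collapse_kinks_left K a b k : 0 <= a -> a < b ->
  (k < kn K)%nat -> kpos K k < b -> kjump K k <> 0 ->
  exists K', (forall t, t = a \/ b <= t -> keval K' t = keval K t) /\ kcost K' < kcost K.
Proof.
  intros Ha Hab Hk Hck Hs.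
  set (dec := fun j => Rlt_dec (kpos K j) b).
  set (M0 := fsum (kn K) (fun j => if dec j then kjump K j else 0)).
  set (M1 := fsum (kn K) (fun j => if dec j then kjump K j * kpos K j else 0)).
  set (w := fsum (kn K) (fun j => if dec j then kjump K j * relu (kpos K j - a) else 0) / (b - a)).
  exists (kgraft K (fun j => if dec j then 0 else kjump K j) b w 0 0
            (kconst K - M1 + w * b) (klin K + M0 - w)).
  split.
  - intros t Ht. rewrite keval_kgraft_drop.
    destruct Ht as [->|Ht].
    + rewrite (fsum_ext _ _ (fun j => (if dec j then kjump K j * relu (kpos K j - a) else 0)
                                      - (if dec j then kjump K j * kpos K j else 0)
                                      + a * (if dec j then kjump K j else 0))).
      * rewrite fsum_plus, fsum_minus, fsum_scal, (relu_of_nonpos (a - b)) by lra.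
        fold M0 M1. unfold w. field. lra.
      * intros j _. destruct (dec j); [|ring].
        rewrite (relu_plus_relu_opp (kpos K j - a)).
        replace (- (kpos K j - a)) with (a - kpos K j) by ring. ring.
    + rewrite (fsum_ext _ _ (fun j => t * (if dec j then kjump K j else 0)
                                      - (if dec j then kjump K j * kpos K j else 0))).
      * rewrite fsum_minus, fsum_scal, relu_of_nonneg by lra. fold M0 M1. ring.
      * intros j _. destruct (dec j); [|ring]. rewrite relu_of_nonneg by lra. ring.
  - rewrite kcost_kgraft, Rabs_R0, Rmult_0_l, Rplus_0_r.
    apply (collapse_cost_lt K _ dec (fun j => relu (kpos K j - a)) b (b - a) k);
      [lra | | exact Hk | exact Hck | exact Hs].
    intros j _ Hj. split; [apply relu_ge0 | apply kink_moved_right_cheaper; assumption].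
Qed.

Lemma collapse_kinks_right K a b k : 0 <= a -> a < b ->
  (k < kn K)%nat -> a < kpos K k -> kjump K k <> 0 ->
  exists K', (forall t, t <= a \/ t = b -> keval K' t = keval K t) /\ kcost K' < kcost K.
Proof.
  intros Ha Hab Hk Hck Hs.
  set (dec := fun j => Rlt_dec a (kpos K j)).
  set (w := fsum (kn K) (fun j => if dec j then kjump K j * relu (b - kpos K j) else 0) / (b - a)).
  exists (kgraft K (fun j => if dec j then 0 else kjump K j) a w 0 0 (kconst K) (klin K)).
  split.
  - intros t Ht. rewrite keval_kgraft_drop.
    destruct Ht as [Ht | ->].
    + rewrite (relu_of_nonpos (t - a)) by lra.
      rewrite (fsum_ext _ _ (fun _ => 0)), fsum_zero; [ring|].
      intros j _. destruct (dec j); [|reflexivity]. rewrite relu_of_nonpos by lra. ring.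
    + rewrite relu_of_nonneg by lra. unfold w. field. lra.
  - rewrite kcost_kgraft, Rabs_R0, Rmult_0_l, Rplus_0_r.
    apply (collapse_cost_lt K _ dec (fun j => relu (b - kpos K j)) a (b - a) k);
      [lra | | exact Hk | exact Hck | exact Hs].
    intros j _ Hj. split; [apply relu_ge0 | apply kink_moved_left_cheaper; assumption].
Qed.

(* Move a part [A] of the jump at [c1] and a part [B] of the opposite jump at [c2]
   into the jump [A + B] at their barycentre [c]; taking [B / A = - rho / (1 + rho)]
   with [rho] small keeps [c] inside [[a, b]]. *)
Lemma merge_opposite_jumps K a b k1 k2 : (k1 < kn K)%nat -> (k2 < kn K)%nat ->
  a < kpos K k1 < b -> a <= kpos K k2 <= b -> kjump K k1 * kjump K k2 < 0 ->
  exists K', (forall t, t <= a \/ b <= t -> keval K' t = keval K t) /\ kcost K' < kcost K.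
Proof.
  intros Hk1 Hk2 Hc1 Hc2 Hs.
  assert (Hne : k1 <> k2) by (intros ->; nra).
  set (c1 := kpos K k1) in *. set (c2 := kpos K k2) in *.
  destruct (common_part _ _ Hs) as [A [HA1 [HA2 [HA3 HA4]]]].
  assert (HA0 : A <> 0) by (intros ->; rewrite Rmult_0_r in HA1; lra).
  set (e := Rmin (c1 - a) (b - c1)).
  assert (He : 0 < e) by (apply Rmin_pos; lra).
  assert (e <= c1 - a) by apply Rmin_l. assert (e <= b - c1) by apply Rmin_r.
  set (rho := e / (b - a)).
  assert (Hrho : 0 < rho) by (apply Rdiv_lt_0_compat; lra).
  assert (Hrho1 : rho * (b - a) = e) by (unfold rho; field; lra).
  assert (Hq : 0 < rho / (1 + rho) < 1).
  { split; [apply Rdiv_lt_0_compat; lra|].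
    apply (Rmult_lt_reg_r (1 + rho)); [lra|]. field_simplify; lra. }
  set (B := - A * (rho / (1 + rho))).
  set (c := c1 + rho * (c1 - c2)).
  assert (Hc : (A + B) * c = A * c1 + B * c2) by (unfold B, c; field; lra).
  assert (Hcin : a <= c <= b).
  { assert (- e <= rho * (c1 - c2) <= e).
    { rewrite <- Hrho1. split.
      - rewrite Ropp_mult_distr_r. apply Rmult_le_compat_l; lra.
      - apply Rmult_le_compat_l; lra. }
    unfold c. lra. }
  exists (kmove K k1 A k2 B c (A + B) 0 0). split.
  - intros t Ht. rewrite keval_kmove by assumption. fold c1 c2.
    destruct Ht as [Ht | Ht].
    + rewrite !relu_of_nonpos by lra. ring.
    + rewrite !relu_of_nonneg by lra.
      replace ((A + B) * (t - c)) with ((A + B) * t - (A * c1 + B * c2)) by (rewrite <- Hc; ring).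
      ring.
  - assert (0 < A * A) by (apply Rsqr_pos_lt, HA0).
    assert (HBa : Rabs B <= Rabs (kjump K k2)).
    { unfold B. rewrite Rabs_mult, Rabs_Ropp, (Rabs_right (rho / (1 + rho))) by lra.
      pose proof (Rabs_pos A). nra. }
    rewrite kcost_kmove by (try assumption; unfold B; nra).
    fold c1 c2. rewrite Rabs_R0, Rmult_0_l, Rplus_0_r.
    pose proof (merged_kink_cheaper A B c1 c2 c ltac:(unfold B; nra) Hc). lra.
Qed.

(* Dilate the jumps at [c1 < m < c2] about [m] by a factor [l > 1], dividing them by [l]. *)
Lemma dilate_opposite_jumps K a m b k1 k2 : 0 <= a -> (k1 < kn K)%nat -> (k2 < kn K)%nat ->
  a < kpos K k1 < m -> m < kpos K k2 < b -> kjump K k1 * kjump K k2 < 0 ->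
  exists K', (forall t, t <= a \/ t = m \/ b <= t -> keval K' t = keval K t) /\ kcost K' < kcost K.
Proof.
  intros Ha Hk1 Hk2 Hc1 Hc2 Hs.
  assert (Hne : k1 <> k2) by (intros ->; lra).
  set (c1 := kpos K k1) in *. set (c2 := kpos K k2) in *.
  destruct (common_part _ _ Hs) as [A [HA1 [HA2 [HA3 HA4]]]].
  set (r1 := (m - a) / (m - c1)). set (r2 := (b - m) / (c2 - m)).
  assert (Hr1 : r1 * (m - c1) = m - a) by (unfold r1; field; lra).
  assert (Hr2 : r2 * (c2 - m) = b - m) by (unfold r2; field; lra).
  set (l := Rmin r1 r2).
  assert (Hl : 1 < l) by (apply Rmin_glb_lt; nra).
  assert (l <= r1) by apply Rmin_l. assert (l <= r2) by apply Rmin_r.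
  set (d1 := m + l * (c1 - m)). set (d2 := m + l * (c2 - m)).
  assert (Hd1 : a <= d1 < m) by (unfold d1; split; nra).
  assert (Hd2 : m < d2 <= b) by (unfold d2; split; nra).
  exists (kmove K k1 A k2 (- A) d1 (A / l) d2 (- A / l)). split.
  - intros t Ht. rewrite keval_kmove by assumption. fold c1 c2.
    destruct Ht as [Ht | [-> | Ht]].
    + rewrite !relu_of_nonpos by lra. ring.
    + rewrite (relu_of_nonneg (m - c1)), (relu_of_nonpos (m - c2)), (relu_of_nonneg (m - d1)),
        (relu_of_nonpos (m - d2)) by lra.
      unfold d1. field. lra.
    + rewrite !relu_of_nonneg by lra. unfold d1, d2. field. lra.
  - rewrite kcost_kmove by (rewrite ?Rabs_Ropp; try assumption; nra).
    fold c1 c2.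
    assert (Hdiv : forall u, Rabs (u / l) = Rabs u / l)
      by (intros u; unfold Rdiv; rewrite Rabs_mult, Rabs_inv, (Rabs_right l) by lra; reflexivity).
    rewrite !Hdiv, Rabs_Ropp.
    assert (Hm : 0 <= m) by lra.
    pose proof (omega_dilate_lt m l c1 Hm Hl ltac:(fold d1; lra)) as O1. fold d1 in O1.
    pose proof (omega_dilate_lt m l c2 Hm Hl ltac:(fold d2; lra)) as O2. fold d2 in O2.
    pose proof (Rabs_pos_lt A ltac:(intros ->; nra)).
    assert (Rabs A / l * omega d1 < Rabs A * omega c1).
    { apply (Rmult_lt_reg_r l); [lra|].
      replace (Rabs A / l * omega d1 * l) with (Rabs A * omega d1) by (field; lra). nra. }
    assert (Rabs A / l * omega d2 < Rabs A * omega c2).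
    { apply (Rmult_lt_reg_r l); [lra|].
      replace (Rabs A / l * omega d2 * l) with (Rabs A * omega d2) by (field; lra). nra. }
    lra.
Qed.

(** * One-sided slopes *)

Definition rslope (K : kinks) (a : R) : R :=
  klin K + fsum (kn K) (fun k => if Rle_dec (kpos K k) a then kjump K k else 0).

Definition lslope (K : kinks) (b : R) : R :=
  klin K + fsum (kn K) (fun k => if Rlt_dec (kpos K k) b then kjump K k else 0).

Definition inner_sum (K : kinks) (a b : R) (F : nat -> R) : R :=
  fsum (kn K) (fun k => if Rlt_dec a (kpos K k) then if Rlt_dec (kpos K k) b then F k else 0 else 0).

Definition inner_jump (K : kinks) (a b : R) (P : R -> Prop) : Prop :=
  exists k, (k < kn K)%nat /\ a < kpos K k < b /\ P (kjump K k).

Lemma lslope_kneg K b : lslope (kneg K) b = - lslope K b.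
Proof.
  unfold lslope, kneg; simpl.
  rewrite (fsum_ext _ _ (fun k => -1 * (if Rlt_dec (kpos K k) b then kjump K k else 0)))
    by (intros k _; destruct (Rlt_dec (kpos K k) b); ring).
  rewrite fsum_scal. ring.
Qed.

Lemma inner_sum_ext K a b F G :
  (forall k, (k < kn K)%nat -> a < kpos K k < b -> F k = G k) -> inner_sum K a b F = inner_sum K a b G.
Proof.
  intros H. apply fsum_ext. intros k Hk.
  destruct (Rlt_dec a (kpos K k)); [|reflexivity].
  destruct (Rlt_dec (kpos K k) b); [|reflexivity]. auto.
Qed.

Lemma inner_sum_le K a b F G :
  (forall k, (k < kn K)%nat -> a < kpos K k < b -> F k <= G k) -> inner_sum K a b F <= inner_sum K a b G.
Proof.
  intros H. apply fsum_le. intros k Hk.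
  destruct (Rlt_dec a (kpos K k)); [|lra].
  destruct (Rlt_dec (kpos K k) b); [|lra]. auto.
Qed.

Lemma inner_sum_nonneg K a b F :
  (forall k, (k < kn K)%nat -> a < kpos K k < b -> 0 <= F k) -> 0 <= inner_sum K a b F.
Proof.
  intros H. apply fsum_nonneg. intros k Hk.
  destruct (Rlt_dec a (kpos K k)); [|lra].
  destruct (Rlt_dec (kpos K k) b); [|lra]. auto.
Qed.

Lemma inner_sum_nonpos K a b F :
  (forall k, (k < kn K)%nat -> a < kpos K k < b -> F k <= 0) -> inner_sum K a b F <= 0.
Proof.
  intros H. apply fsum_nonpos. intros k Hk.
  destruct (Rlt_dec a (kpos K k)); [|lra].
  destruct (Rlt_dec (kpos K k) b); [|lra]. auto.
Qed.

Lemma inner_sum_eq0 K a b F :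
  (forall k, (k < kn K)%nat -> a < kpos K k < b -> F k = 0) -> inner_sum K a b F = 0.
Proof.
  intros H. apply Rle_antisym; [apply inner_sum_nonpos | apply inner_sum_nonneg];
    intros k Hk Hc; rewrite H by assumption; lra.
Qed.

Lemma inner_sum_pos K a b F k :
  (forall j, (j < kn K)%nat -> a < kpos K j < b -> 0 <= F j) ->
  (k < kn K)%nat -> a < kpos K k < b -> 0 < F k -> 0 < inner_sum K a b F.
Proof.
  intros H Hk Hc Hf. rewrite <- (fsum_zero (kn K)). apply (fsum_lt _ _ _ k); [| exact Hk |].
  - intros j Hj. destruct (Rlt_dec a (kpos K j)); [|lra].
    destruct (Rlt_dec (kpos K j) b); [|lra]. auto.
  - destruct (Rlt_dec a (kpos K k)); [|lra]. destruct (Rlt_dec (kpos K k) b); [|lra]. exact Hf.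
Qed.

Lemma inner_sum_scal K a b F r : r * inner_sum K a b F = inner_sum K a b (fun k => r * F k).
Proof.
  unfold inner_sum. rewrite <- fsum_scal. apply fsum_ext. intros k _.
  destruct (Rlt_dec a (kpos K k)); [|ring]. destruct (Rlt_dec (kpos K k) b); ring.
Qed.

Lemma keval_from_left K a b t : a <= t <= b ->
  keval K t = keval K a + (t - a) * rslope K a
              + inner_sum K a b (fun k => kjump K k * relu (t - kpos K k)).
Proof.
  intros Ht. unfold keval, rslope, inner_sum.
  rewrite Rmult_plus_distr_l, <- fsum_scal.
  enough (fsum (kn K) (fun j => kjump K j * relu (t - kpos K j)) =
          fsum (kn K) (fun j => kjump K j * relu (a - kpos K j)
            + (t - a) * (if Rle_dec (kpos K j) a then kjump K j else 0)
            + (if Rlt_dec a (kpos K j) then if Rlt_dec (kpos K j) b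
               then kjump K j * relu (t - kpos K j) else 0 else 0)))
    as -> by (rewrite !fsum_plus; ring).
  apply fsum_ext. intros k _.
  destruct (Rle_dec (kpos K k) a); destruct (Rlt_dec a (kpos K k)); try lra.
  - rewrite !relu_of_nonneg by lra. ring.
  - rewrite (relu_of_nonpos (a - _)) by lra.
    destruct (Rlt_dec (kpos K k) b); [ring|]. rewrite relu_of_nonpos by lra. ring.
Qed.

Lemma keval_from_right K a b t : a <= t <= b ->
  keval K t = keval K b + (t - b) * lslope K b
              + inner_sum K a b (fun k => kjump K k * relu (kpos K k - t)).
Proof.
  intros Ht. unfold keval, lslope, inner_sum.
  rewrite Rmult_plus_distr_l, <- fsum_scal.
  enough (fsum (kn K) (fun j => kjump K j * relu (t - kpos K j)) =
          fsum (kn K) (fun j => kjump K j * relu (b - kpos K j)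
            + (t - b) * (if Rlt_dec (kpos K j) b then kjump K j else 0)
            + (if Rlt_dec a (kpos K j) then if Rlt_dec (kpos K j) b
               then kjump K j * relu (kpos K j - t) else 0 else 0)))
    as -> by (rewrite !fsum_plus; ring).
  apply fsum_ext. intros k _.
  destruct (Rlt_dec (kpos K k) b); destruct (Rlt_dec a (kpos K k)).
  - rewrite (relu_plus_relu_opp (t - _)), (relu_of_nonneg (b - _)) by lra.
    replace (- (t - kpos K k)) with (kpos K k - t) by ring. ring.
  - rewrite !relu_of_nonneg by lra. ring.
  - rewrite !relu_of_nonpos by lra. ring.
  - rewrite !relu_of_nonpos by lra. ring.
Qed.

Lemma keval_diff_rslope K a b : a < b ->
  keval K b - keval K a = (b - a) * rslope K a + inner_sum K a b (fun k => kjump K k * (b - kpos K k)).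
Proof.
  intros Hab. rewrite (keval_from_left K a b b) by lra.
  rewrite (inner_sum_ext K a b _ (fun k => kjump K k * (b - kpos K k))); [ring|].
  intros k _ Hc. rewrite relu_of_nonneg by lra. reflexivity.
Qed.

Lemma keval_diff_lslope K a b : a < b ->
  keval K b - keval K a = (b - a) * lslope K b - inner_sum K a b (fun k => kjump K k * (kpos K k - a)).
Proof.
  intros Hab. rewrite (keval_from_right K a b a) by lra.
  rewrite (inner_sum_ext K a b _ (fun k => kjump K k * (kpos K k - a))); [ring|].
  intros k _ Hc. rewrite relu_of_nonneg by lra. reflexivity.
Qed.

Lemma inner_pos_jump_of_rslope_lt K a b : a < b ->
  rslope K a * (b - a) < keval K b - keval K a -> inner_jump K a b (Rlt 0).
Proof.
  intros Hab H. apply NNPP. intros Hno. rewrite keval_diff_rslope in H by exact Hab.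
  enough (inner_sum K a b (fun k => kjump K k * (b - kpos K k)) <= 0) by nra.
  apply inner_sum_nonpos.
  intros k Hk Hc. assert (kjump K k <= 0) by (apply Rnot_lt_le; intro; apply Hno; now exists k).
  nra.
Qed.

Lemma inner_neg_jump_of_lslope_lt K a b : a < b ->
  lslope K b * (b - a) < keval K b - keval K a -> inner_jump K a b (Rgt 0).
Proof.
  intros Hab H. apply NNPP. intros Hno. rewrite keval_diff_lslope in H by exact Hab.
  enough (0 <= inner_sum K a b (fun k => kjump K k * (kpos K k - a))) by nra.
  apply inner_sum_nonneg.
  intros k Hk Hc. assert (0 <= kjump K k) by (apply Rnot_lt_le; intro; apply Hno; now exists k).
  nra.
Qed.

Lemma lslope_le_rslope K a :
  (forall k, (k < kn K)%nat -> kpos K k = a -> 0 <= kjump K k) -> lslope K a <= rslope K a.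
Proof.
  intros H. apply Rplus_le_compat_l, fsum_le. intros k Hk.
  destruct (Rle_dec (kpos K k) a); destruct (Rlt_dec (kpos K k) a); try lra.
  apply H; [exact Hk | lra].
Qed.

Lemma rslope_le_lslope K a :
  (forall k, (k < kn K)%nat -> kpos K k = a -> kjump K k <= 0) -> rslope K a <= lslope K a.
Proof.
  intros H. apply Rplus_le_compat_l, fsum_le. intros k Hk.
  destruct (Rle_dec (kpos K k) a); destruct (Rlt_dec (kpos K k) a); try lra.
  apply H; [exact Hk | lra].
Qed.

Lemma relu_below_chord a b c t : a < c < b -> a <= t <= b ->
  relu (t - c) * (b - a) <= (b - c) * (t - a).
Proof.
  intros. destruct (Rle_dec t c).
  - rewrite relu_of_nonpos by lra. nra.
  - rewrite relu_of_nonneg by lra. nra.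
Qed.

Lemma convex_piece_chord_or_bent K a b t d : a < b -> a <= t <= b ->
  (forall k, (k < kn K)%nat -> a < kpos K k < b -> 0 <= kjump K k) ->
  keval K b - keval K a = d * (b - a) ->
  keval K t = keval K a + d * (t - a) \/
  (rslope K a < d < lslope K b /\
   keval K a + rslope K a * (t - a) <= keval K t <= keval K a + d * (t - a) /\
   keval K b + lslope K b * (t - b) <= keval K t).
Proof.
  intros Hab Ht Hconv Hd.
  set (J := inner_sum K a b (fun k => kjump K k * relu (t - kpos K k))).
  set (Jb := inner_sum K a b (fun k => kjump K k * (b - kpos K k))).
  set (Ja := inner_sum K a b (fun k => kjump K k * (kpos K k - a))).
  assert (Et : keval K t = keval K a + (t - a) * rslope K a + J) by now apply keval_from_left.
  assert (Eb : keval K b - keval K a = (b - a) * rslope K a + Jb) by now apply keval_diff_rslope.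
  assert (Ea : keval K b - keval K a = (b - a) * lslope K b - Ja) by now apply keval_diff_lslope.
  assert (HJ : 0 <= J).
  { apply inner_sum_nonneg. intros k Hk Hc.
    pose proof (Hconv k Hk Hc). pose proof (relu_ge0 (t - kpos K k)). nra. }
  assert (HJb : 0 <= Jb) by (apply inner_sum_nonneg; intros k Hk Hc; pose proof (Hconv k Hk Hc); nra).
  assert (HJa : 0 <= Ja) by (apply inner_sum_nonneg; intros k Hk Hc; pose proof (Hconv k Hk Hc); nra).
  assert (Hchord : J * (b - a) <= Jb * (t - a)).
  { unfold J, Jb. rewrite Rmult_comm, (Rmult_comm _ (t - a)), !inner_sum_scal.
    apply inner_sum_le. intros k Hk Hc.
    pose proof (relu_below_chord a b (kpos K k) t Hc Ht). pose proof (Hconv k Hk Hc). nra. }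
  assert (HJd : Jb = (d - rslope K a) * (b - a)) by lra.
  destruct (Req_dec (rslope K a) d) as [Hs|Hs].
  - left. assert (J = 0) by (rewrite HJd, Hs, Rminus_diag, Rmult_0_l, Rmult_0_l in Hchord; nra).
    rewrite Et, Hs. lra.
  - right.
    assert (Hsd : rslope K a < d) by (assert (0 <= (d - rslope K a) * (b - a)) by lra; nra).
    destruct (inner_pos_jump_of_rslope_lt K a b Hab ltac:(nra)) as [k [Hk [Hc Hpos]]].
    assert (0 < Ja).
    { apply (inner_sum_pos K a b _ k); [| exact Hk | exact Hc | nra].
      intros j Hj Hcj. pose proof (Hconv j Hj Hcj). nra. }
    assert (HJ' : 0 <= inner_sum K a b (fun k => kjump K k * relu (kpos K k - t))).
    { apply inner_sum_nonneg. intros j Hj Hcj.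
      pose proof (Hconv j Hj Hcj). pose proof (relu_ge0 (kpos K j - t)). nra. }
    pose proof (keval_from_right K a b t Ht).
    assert (J <= (d - rslope K a) * (t - a)).
    { apply (Rmult_le_reg_r (b - a)); [lra|]. nra. }
    repeat split; nra.
Qed.

(** * Minimal kink models *)

Section MinimalKinks.

Variables (n : nat) (x y : nat -> R) (K : kinks).
Hypothesis Hn : (2 <= n)%nat.
Hypothesis Hx1 : 0 <= x 1%nat.
Hypothesis Hinc : forall i, (1 <= i < n)%nat -> x i < x (S i).
Hypothesis Hmin : kmin n x y K.

Lemma x_lt i j : (1 <= i)%nat -> (i < j <= n)%nat -> x i < x j.
Proof.
  intros Hi. induction j as [|j IH]; intros Hj; [lia|].
  destruct (Nat.eq_dec i j) as [->|Hne].
  - apply Hinc. lia.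
  - apply (Rlt_trans _ (x j)); [apply IH; lia | apply Hinc; lia].
Qed.

Lemma x_le i j : (1 <= i)%nat -> (i <= j <= n)%nat -> x i <= x j.
Proof.
  intros Hi Hj. destruct (Nat.eq_dec i j) as [->|Hne]; [lra|].
  left. apply x_lt; lia.
Qed.

Lemma x_nonneg i : (1 <= i <= n)%nat -> 0 <= x i.
Proof. intros. apply (Rle_trans _ (x 1%nat)); [exact Hx1 | apply x_le; lia]. Qed.

Lemma kcost_le_of_agree K' :
  (forall i, (1 <= i <= n)%nat -> keval K' (x i) = keval K (x i)) -> kcost K <= kcost K'.
Proof. intros H. apply (proj2 Hmin). intros i Hi. rewrite H by exact Hi. now apply (proj1 Hmin). Qed.

Lemma jump_left_of_x2 k : (k < kn K)%nat -> kpos K k < x 2%nat -> kjump K k = 0.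
Proof.
  intros Hk Hck. apply NNPP. intros Hs.
  destruct (collapse_kinks_left K (x 1%nat) (x 2%nat) k Hx1 ltac:(apply Hinc; lia) Hk Hck Hs)
    as [K' [Hv Hc]].
  enough (kcost K <= kcost K') by lra.
  apply kcost_le_of_agree. intros i Hi. apply Hv.
  destruct (Nat.eq_dec i 1) as [->|]; [now left | right; apply x_le; lia].
Qed.

Lemma jump_right_of_last k : (k < kn K)%nat -> x (n - 1)%nat < kpos K k -> kjump K k = 0.
Proof.
  intros Hk Hck. apply NNPP. intros Hs.
  destruct (collapse_kinks_right K (x (n - 1)%nat) (x n) k ltac:(apply x_nonneg; lia)
              ltac:(apply x_lt; lia) Hk Hck Hs) as [K' [Hv Hc]].
  enough (kcost K <= kcost K') by lra.
  apply kcost_le_of_agree. intros i Hi. apply Hv.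
  destruct (Nat.eq_dec i n) as [->|]; [now right | left; apply x_le; lia].
Qed.

Lemma piece_jumps_not_opposite j k1 k2 : (1 <= j <= n - 1)%nat ->
  (k1 < kn K)%nat -> (k2 < kn K)%nat ->
  x j < kpos K k1 < x (S j) -> x j <= kpos K k2 <= x (S j) ->
  0 <= kjump K k1 * kjump K k2.
Proof.
  intros Hj Hk1 Hk2 Hc1 Hc2. apply Rnot_lt_le. intros Hs.
  destruct (merge_opposite_jumps K (x j) (x (S j)) k1 k2 Hk1 Hk2 Hc1 Hc2 Hs) as [K' [Hv Hc]].
  enough (kcost K <= kcost K') by lra.
  apply kcost_le_of_agree. intros i Hi. apply Hv.
  destruct (le_lt_dec i j); [left | right]; apply x_le; lia.
Qed.

Lemma jumps_around_point_not_opposite j k1 k2 : (2 <= j <= n - 1)%nat ->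
  (k1 < kn K)%nat -> (k2 < kn K)%nat ->
  x (j - 1)%nat < kpos K k1 < x j -> x j < kpos K k2 < x (S j) ->
  0 <= kjump K k1 * kjump K k2.
Proof.
  intros Hj Hk1 Hk2 Hc1 Hc2. apply Rnot_lt_le. intros Hs.
  destruct (dilate_opposite_jumps K (x (j - 1)%nat) (x j) (x (S j)) k1 k2
              ltac:(apply x_nonneg; lia) Hk1 Hk2 Hc1 Hc2 Hs) as [K' [Hv Hc]].
  enough (kcost K <= kcost K') by lra.
  apply kcost_le_of_agree. intros i Hi. apply Hv.
  destruct (lt_eq_lt_dec i j) as [[Hij | ->] | Hij]; [left | now (right; left) | right; right];
    apply x_le; lia.
Qed.

Lemma keval_chord j : (1 <= j <= n - 1)%nat ->
  keval K (x (S j)) - keval K (x j) = slope x y j * (x (S j) - x j).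
Proof.
  intros Hj. rewrite !(proj1 Hmin) by lia. unfold slope.
  assert (x j < x (S j)) by (apply Hinc; lia). field. lra.
Qed.

Lemma rslope_ge j : (2 <= j <= n - 1)%nat ->
  Rmin (slope x y (j - 1)) (slope x y j) <= rslope K (x j).
Proof.
  intros Hj. apply Rnot_lt_le. intros Hlt.
  pose proof (Rmin_l (slope x y (j - 1)) (slope x y j)).
  pose proof (Rmin_r (slope x y (j - 1)) (slope x y j)).
  assert (Hr : x j < x (S j)) by (apply Hinc; lia).
  assert (Hl : x (j - 1)%nat < x j) by (apply x_lt; lia).
  pose proof (keval_chord j ltac:(lia)) as Cr.
  pose proof (keval_chord (j - 1) ltac:(lia)) as Cl. replace (S (j - 1)) with j in Cl by lia.
  destruct (inner_pos_jump_of_rslope_lt K (x j) (x (S j)) Hr ltac:(nra)) as [k2 [Hk2 [Hc2 Hs2]]].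
  assert (Hat : forall k, (k < kn K)%nat -> kpos K k = x j -> 0 <= kjump K k).
  { intros k Hk Hck. pose proof (piece_jumps_not_opposite j k2 k ltac:(lia) Hk2 Hk Hc2 ltac:(lra)).
    nra. }
  pose proof (lslope_le_rslope K (x j) Hat).
  destruct (inner_neg_jump_of_lslope_lt K (x (j - 1)) (x j) Hl ltac:(nra)) as [k1 [Hk1 [Hc1 Hs1]]].
  pose proof (jumps_around_point_not_opposite j k1 k2 Hj Hk1 Hk2 Hc1 Hc2).
  unfold Rgt in Hs1. nra.
Qed.

Lemma lslope_ge j : (2 <= j <= n - 1)%nat ->
  Rmin (slope x y (j - 1)) (slope x y j) <= lslope K (x j).
Proof.
  intros Hj. apply Rnot_lt_le. intros Hlt.
  pose proof (Rmin_l (slope x y (j - 1)) (slope x y j)).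
  pose proof (Rmin_r (slope x y (j - 1)) (slope x y j)).
  assert (Hr : x j < x (S j)) by (apply Hinc; lia).
  assert (Hl : x (j - 1)%nat < x j) by (apply x_lt; lia).
  pose proof (keval_chord j ltac:(lia)) as Cr.
  pose proof (keval_chord (j - 1) ltac:(lia)) as Cl. replace (S (j - 1)) with j in Cl by lia.
  destruct (inner_neg_jump_of_lslope_lt K (x (j - 1)) (x j) Hl ltac:(nra)) as [k1 [Hk1 [Hc1 Hs1]]].
  assert (Hat : forall k, (k < kn K)%nat -> kpos K k = x j -> kjump K k <= 0).
  { intros k Hk Hck.
    pose proof (piece_jumps_not_opposite (j - 1) k1 k ltac:(lia) Hk1 Hk
                  ltac:(replace (S (j - 1)) with j by lia; exact Hc1)
                  ltac:(replace (S (j - 1)) with j by lia; lra)).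
    unfold Rgt in Hs1. nra. }
  pose proof (rslope_le_lslope K (x j) Hat).
  destruct (inner_pos_jump_of_rslope_lt K (x j) (x (S j)) Hr ltac:(nra)) as [k2 [Hk2 [Hc2 Hs2]]].
  pose proof (jumps_around_point_not_opposite j k1 k2 Hj Hk1 Hk2 Hc1 Hc2).
  unfold Rgt in Hs1. nra.
Qed.

Lemma piece_jumps_same_sign j : (1 <= j <= n - 1)%nat ->
  (forall k, (k < kn K)%nat -> x j < kpos K k < x (S j) -> 0 <= kjump K k) \/
  (forall k, (k < kn K)%nat -> x j < kpos K k < x (S j) -> kjump K k <= 0).
Proof.
  intros Hj. destruct (classic (inner_jump K (x j) (x (S j)) (Rlt 0))) as [[k1 [Hk1 [Hc1 Hs1]]]|Hno].
  - left. intros k Hk Hc.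
    pose proof (piece_jumps_not_opposite j k1 k Hj Hk1 Hk Hc1 ltac:(lra)). nra.
  - right. intros k Hk Hc. apply Rnot_lt_le. intros Hs. apply Hno. now exists k.
Qed.

Lemma keval_left_of_x2 t : t < x 2%nat -> keval K t = gseg x y 1 t.
Proof.
  intros Ht. assert (H12 : x 1%nat < x 2%nat) by (apply Hinc; lia).
  assert (Hline : forall u, u <= x 2%nat ->
            keval K u = keval K (x 2%nat) + (u - x 2%nat) * lslope K (x 2%nat)).
  { intros u Hu. rewrite (keval_from_right K u (x 2%nat) u) by lra.
    rewrite inner_sum_eq0; [ring|].
    intros k Hk Hc. rewrite jump_left_of_x2 by (try assumption; lra). ring. }
  pose proof (Hline (x 1%nat) ltac:(lra)) as H1.
  rewrite (proj1 Hmin 1%nat), (proj1 Hmin 2%nat) in H1 by lia.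
  rewrite Hline by lra. rewrite (proj1 Hmin 2%nat) by lia.
  assert (HL : lslope K (x 2%nat) = slope x y 1).
  { unfold slope. apply (Rmult_eq_reg_r (x 2%nat - x 1%nat)); [|lra].
    unfold Rdiv. rewrite Rmult_assoc, Rinv_l by lra. lra. }
  rewrite HL in *. unfold gseg. rewrite H1. ring.
Qed.

Lemma keval_right_of_last t : x (n - 1)%nat <= t -> keval K t = gseg x y (n - 1) t.
Proof.
  intros Ht. assert (Hlast : x (n - 1)%nat < x n) by (apply x_lt; lia).
  assert (Hline : forall u, x (n - 1)%nat <= u ->
            keval K u = keval K (x (n - 1)%nat) + (u - x (n - 1)%nat) * rslope K (x (n - 1)%nat)).
  { intros u Hu. rewrite (keval_from_left K (x (n - 1)%nat) u u) by lra.
    rewrite inner_sum_eq0; [ring|].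
    intros k Hk Hc. rewrite jump_right_of_last by (try assumption; lra). ring. }
  pose proof (keval_chord (n - 1) ltac:(lia)) as Hc. replace (S (n - 1)) with n in Hc by lia.
  rewrite (Hline (x n)) in Hc by lra.
  assert (HR : rslope K (x (n - 1)%nat) = slope x y (n - 1)).
  { apply (Rmult_eq_reg_r (x n - x (n - 1)%nat)); [lra | lra]. }
  rewrite Hline, HR, (proj1 Hmin) by (lra || lia). unfold gseg. ring.
Qed.

End MinimalKinks.

(** * The interpolant between data points *)

Lemma slope_opp x y j : slope x (fun i => - y i) j = - slope x y j.
Proof. unfold slope, Rdiv. ring. Qed.

Lemma gseg_opp x y i t : gseg x (fun i => - y i) i t = - gseg x y i t.
Proof. unfold gseg. rewrite slope_opp. ring. Qed.

Lemma gseg_right_anchor x y j t : x j <> x (S j) ->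
  gseg x y j t = y (S j) + slope x y j * (t - x (S j)).
Proof.
  intros H. unfold gseg, slope. field.
  intros E. apply H. lra.
Qed.

Lemma neighbour_lines_below_chord x y i t : (1 <= i)%nat -> x (i - 1)%nat < x i < x (S i) ->
  x i <= t <= x (S i) -> slope x y (i - 1) <= slope x y i <= slope x y (S i) ->
  Rmax (gseg x y (i - 1) t) (gseg x y (S i) t) <= gseg x y i t.
Proof.
  intros Hi Hx Ht Hs. apply Rmax_lub.
  - rewrite (gseg_right_anchor x y (i - 1)) by (replace (S (i - 1)) with i by lia; lra).
    replace (S (i - 1)) with i by lia. unfold gseg. nra.
  - rewrite (gseg_right_anchor x y i) by lra. unfold gseg. nra.
Qed.

Lemma neighbour_lines_above_chord x y i t : (1 <= i)%nat -> x (i - 1)%nat < x i < x (S i) ->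
  x i <= t <= x (S i) -> slope x y (S i) <= slope x y i <= slope x y (i - 1) ->
  gseg x y i t <= Rmin (gseg x y (i - 1) t) (gseg x y (S i) t).
Proof.
  intros Hi Hx Ht Hs.
  pose proof (neighbour_lines_below_chord x (fun i => - y i) i t Hi Hx Ht) as H.
  rewrite !slope_opp, !gseg_opp, <- Ropp_Rmin in H. lra.
Qed.

Lemma Rmin_le_lt_r a b c : Rmin a b <= c -> c < b -> a <= c.
Proof. unfold Rmin. destruct (Rle_dec a b); lra. Qed.

Lemma Rmax_ge_gt_l a b c : c <= Rmax a b -> a < c -> c <= b.
Proof. unfold Rmax. destruct (Rle_dec a b); lra. Qed.

Lemma lslope_le n x y K : (2 <= n)%nat -> 0 <= x 1%nat ->
  (forall i, (1 <= i < n)%nat -> x i < x (S i)) -> kmin n x y K ->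
  forall j, (2 <= j <= n - 1)%nat -> lslope K (x j) <= Rmax (slope x y (j - 1)) (slope x y j).
Proof.
  intros Hn Hx1 Hinc Hmin j Hj.
  pose proof (lslope_ge n x _ _ Hn Hx1 Hinc (kmin_kneg n x y K Hmin) j Hj) as H.
  rewrite !slope_opp, lslope_kneg, <- Ropp_Rmax in H. lra.
Qed.

Lemma kmin_convex_piece n x y K : (2 <= n)%nat -> 0 <= x 1%nat ->
  (forall i, (1 <= i < n)%nat -> x i < x (S i)) -> kmin n x y K ->
  forall i t, (2 <= i <= n - 2)%nat -> x i <= t <= x (S i) ->
  (forall k, (k < kn K)%nat -> x i < kpos K k < x (S i) -> 0 <= kjump K k) ->
  keval K t = gseg x y i t \/
  (slope x y (i - 1) < slope x y i < slope x y (S i) /\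
   Rmax (gseg x y (i - 1) t) (gseg x y (S i) t) <= keval K t <= gseg x y i t).
Proof.
  intros Hn Hx1 Hinc Hmin i t Hi Ht Hconv.
  assert (Hab : x i < x (S i)) by (apply Hinc; lia).
  assert (Hl : x (i - 1)%nat < x i) by (apply (x_lt n x Hn Hinc); lia).
  assert (Ya : keval K (x i) = y i) by (apply (proj1 Hmin); lia).
  assert (Yb : keval K (x (S i)) = y (S i)) by (apply (proj1 Hmin); lia).
  destruct (convex_piece_chord_or_bent K (x i) (x (S i)) t (slope x y i) Hab Ht Hconv
              (keval_chord n x y K Hn Hinc Hmin i ltac:(lia))) as [Hf | [Hs [Hlo Hhi]]].
  - left. rewrite Hf, Ya. unfold gseg. ring.
  - right.
    pose proof (rslope_ge n x y K Hn Hx1 Hinc Hmin i ltac:(lia)) as Hr.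
    pose proof (lslope_le n x y K Hn Hx1 Hinc Hmin (S i) ltac:(lia)) as Hl'.
    replace (S i - 1)%nat with i in Hl' by lia.
    pose proof (Rmin_le_lt_r _ _ _ Hr ltac:(lra)).
    pose proof (Rmax_ge_gt_l _ _ _ Hl' ltac:(lra)).
    rewrite (gseg_right_anchor x y (i - 1)) by (replace (S (i - 1)) with i by lia; lra).
    replace (S (i - 1)) with i by lia.
    split; [lra|]. split; [apply Rmax_lub|].
    + rewrite <- Ya. nra.
    + unfold gseg at 1. rewrite <- Yb. nra.
    + unfold gseg. rewrite <- Ya. lra.
Qed.

Lemma kmin_piece_trichotomy n x y K : (2 <= n)%nat -> 0 <= x 1%nat ->
  (forall i, (1 <= i < n)%nat -> x i < x (S i)) -> kmin n x y K ->
  forall i t, (2 <= i <= n - 2)%nat -> x i <= t <= x (S i) ->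
  keval K t = gseg x y i t \/
  (slope x y (i - 1) < slope x y i < slope x y (S i) /\
   Rmax (gseg x y (i - 1) t) (gseg x y (S i) t) <= keval K t <= gseg x y i t) \/
  (slope x y (S i) < slope x y i < slope x y (i - 1) /\
   gseg x y i t <= keval K t <= Rmin (gseg x y (i - 1) t) (gseg x y (S i) t)).
Proof.
  intros Hn Hx1 Hinc Hmin i t Hi Ht.
  destruct (piece_jumps_same_sign n x y K Hn Hinc Hmin i ltac:(lia)) as [Hconv|Hconc].
  - destruct (kmin_convex_piece n x y K Hn Hx1 Hinc Hmin i t Hi Ht Hconv); tauto.
  - destruct (kmin_convex_piece n x _ _ Hn Hx1 Hinc (kmin_kneg n x y K Hmin) i t Hi Ht)
      as [Hf | [Hs Hb]].
    + intros k Hk Hc. simpl. pose proof (Hconc k Hk Hc). lra.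
    + left. rewrite keval_kneg, gseg_opp in Hf. lra.
    + right; right. rewrite keval_kneg, !slope_opp, !gseg_opp, <- Ropp_Rmin in *. lra.
Qed.

Lemma curv_eq_1 n x y i : (2 <= i <= n - 1)%nat ->
  curv n x y i = 1%Z <-> slope x y (i - 1) < slope x y i.
Proof.
  intros Hi. unfold curv, delta.
  destruct (Nat.eqb_spec (i - 1) 0), (Nat.eqb_spec (i - 1) n), (Nat.eqb_spec i 0),
    (Nat.eqb_spec i n); try lia.
  destruct (Rlt_dec (slope x y (i - 1)) (slope x y i)); [tauto|].
  destruct (Rlt_dec (slope x y i) (slope x y (i - 1))); split; easy.
Qed.

Lemma curv_eq_m1 n x y i : (2 <= i <= n - 1)%nat ->
  curv n x y i = (-1)%Z <-> slope x y i < slope x y (i - 1).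
Proof.
  intros Hi. unfold curv, delta.
  destruct (Nat.eqb_spec (i - 1) 0), (Nat.eqb_spec (i - 1) n), (Nat.eqb_spec i 0),
    (Nat.eqb_spec i n); try lia.
  destruct (Rlt_dec (slope x y (i - 1)) (slope x y i)); [split; [discriminate | lra]|].
  destruct (Rlt_dec (slope x y i) (slope x y (i - 1))); split; easy.
Qed.

Theorem lemma2 (n : nat) (x y : nat -> R) (N : net) :
  (2 <= n)%nat ->
  0 <= x 1%nat ->
  (forall i, (1 <= i < n)%nat -> x i < x (S i)) ->
  min_norm_interp n x y N ->
  (forall t, t < x 2%nat -> net_eval N t = gseg x y 1 t) /\
  (forall t, x (n - 1)%nat <= t -> net_eval N t = gseg x y (n - 1) t) /\
  (forall i t, (2 <= i <= n - 2)%nat -> x i <= t < x (S i) ->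
     (curv n x y i = 1%Z /\ curv n x y (S i) = 1%Z ->
        Rmax (gseg x y (i - 1) t) (gseg x y (S i) t) <= net_eval N t <= gseg x y i t) /\
     (curv n x y i = (-1)%Z /\ curv n x y (S i) = (-1)%Z ->
        gseg x y i t <= net_eval N t <= Rmin (gseg x y (i - 1) t) (gseg x y (S i) t)) /\
     (~ (curv n x y i = 1%Z /\ curv n x y (S i) = 1%Z) ->
      ~ (curv n x y i = (-1)%Z /\ curv n x y (S i) = (-1)%Z) ->
        net_eval N t = gseg x y i t)).
Proof.
  intros Hn Hx1 Hinc Hmin.
  pose proof (kmin_kinks_of_net n x y N Hmin) as HK.
  assert (E : forall t, net_eval N t = keval (kinks_of_net N) t)
    by (intros t; symmetry; apply keval_kinks_of_net).
  split; [|split].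
  - intros t Ht. rewrite E. exact (keval_left_of_x2 n x y _ Hn Hx1 Hinc HK t Ht).
  - intros t Ht. rewrite E. exact (keval_right_of_last n x y _ Hn Hx1 Hinc HK t Ht).
  - intros i t Hi Ht. rewrite !E.
    rewrite !curv_eq_1, !curv_eq_m1 by lia. replace (S i - 1)%nat with i by lia.
    assert (Hx : x (i - 1)%nat < x i < x (S i)) by (split; apply (x_lt n x Hn Hinc); lia).
    destruct (kmin_piece_trichotomy n x y _ Hn Hx1 Hinc HK i t Hi ltac:(lra))
      as [Hf | [[Hs Hb] | [Hs Hb]]].
    + rewrite Hf. split; [|split]; intros Hs; [| |reflexivity]; split; try lra.
      * apply neighbour_lines_below_chord; lra || lia.
      * apply neighbour_lines_above_chord; lra || lia.
    + split; [|split]; intros; [exact Hb | lra | tauto].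
    + split; [|split]; intros; [lra | exact Hb | tauto].
Qed.
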